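(* Let $R=R_{K\times L,(x_0,y_0)}$ be a rectangle and let $f:\Omega\to\mathbb{R}$ be an $R$-local function. Then $\mu^{\mathrm{per}}_{\Lambda,\lambda}(f\cdot\tau f)\ge0$ in each of the two cases: (a) $\Lambda=R_{2K\times L}$ and $\tau$ is the reflection of $\mathbb{R}^2$ through the vertical line $x=x_0+K$; (b) $\Lambda=R_{K\times2L}$ and $\tau$ is the reflection through the horizontal line $y=y_0+L$. Here $(\tau f)(\sigma)=f(\sigma\circ\tau)$, with $\tau$ restricted to $\mathbb{Z}^2$.
   Context: Tiles: $T_{(x,y)}=[x-1,x+1]\times[y-1,y+1]$; $\Omega=\{\sigma\in\{0,1\}^{\mathbb{Z}^2}: \sigma(u)=\sigma(v)=1,u\ne v\Rightarrow\mathrm{int}(T_u)\cap\mathrm{int}(T_v)=\emptyset\}$. A rectangle is a closed axis-parallel rectangle with integer corners; $R_{K\times L,(x,y)}=[x,x+K]\times[y,y+L]$, $R_{K\times L}=R_{K\times L,(0,0)}$. A face is a unit square with integer corners, vacant in $\sigma$ if contained in no tile of $\sigma$. For a rectangle $\Lambda$ and $\lambda>0$: $w_{\Lambda,\lambda}(\sigma)=\lambda^{-\frac14\#\{\text{vacant faces }\subset\Lambda\}}$; $\Omega^{\mathrm{per}}_\Lambda$ is the set of $\sigma\in\Omega$ periodic with periods $(\mathrm{Width}(\Lambda),0)$ and $(0,\mathrm{Height}(\Lambda))$; $\mu^{\mathrm{per}}_{\Lambda,\lambda}(\sigma)=w_{\Lambda,\lambda}(\sigma)/\sum_{\sigma'\in\Omega^{\mathrm{per}}_\Lambda}w_{\Lambda,\lambda}(\sigma')$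 on $\Omega^{\mathrm{per}}_\Lambda$. A function $f$ on $\Omega$ is $R$-local if $f(\sigma)$ depends only on $\sigma$ restricted to $R\cap\mathbb{Z}^2$ ($R$ closed). *)

From HB Require Import structures.
From mathcomp Require Import all_boot all_order all_algebra.
From mathcomp Require Import boolp reals exp.
Set Implicit Arguments. Unset Strict Implicit. Unset Printing Implicit Defensive.
Import Order.TTheory GRing.Theory Num.Theory.
Local Open Scope ring_scope.

(* A configuration sigma in {0,1}^{Z^2}: sigma z = true means a tile sits at z. *)
Definition config := int * int -> bool.

(* int(T_u) /\ int(T_v) = empty, where T_(x,y) = [x-1,x+1] x [y-1,y+1]:
   the open squares (x-1,x+1)x(y-1,y+1) are disjoint iff the open intervals
   are disjoint in one of the coordinates, i.e. |dx| >= 2 or |dy| >= 2. *)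
Definition tiles_int_disjoint (u v : int * int) : bool :=
  (2 <= `|u.1 - v.1|) || (2 <= `|u.2 - v.2|).

Definition in_Omega (sigma : config) : Prop :=
  forall u v, sigma u -> sigma v -> u <> v -> tiles_int_disjoint u v.

(* The face [a,a+1]x[b,b+1] (indexed by its lower-left corner (a,b)) is
   contained in the tile T_(x,y). *)
Definition face_in_tile (a : int * int) (u : int * int) : bool :=
  [&& u.1 - 1 <= a.1, a.1 + 1 <= u.1 + 1, u.2 - 1 <= a.2 & a.2 + 1 <= u.2 + 1].

Definition vacant (sigma : config) (a : int * int) : Prop :=
  ~ (exists u, sigma u /\ face_in_tile a u).

(* Number of vacant faces contained in Lambda = [0,W] x [0,H]. *)
Definition n_vacant (W H : nat) (sigma : config) : nat :=
  #|[set p : 'I_W * 'I_H | `[< vacant sigma ((nat_of_ord p.1)%:Z, (nat_of_ord p.2)%:Z) >]]|.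

Definition weight {R : realType} (W H : nat) (lam : R) (sigma : config) : R :=
  lam `^ (- (4%:R)^-1 * (n_vacant W H sigma)%:R).

(* Periodic configurations with periods (W,0), (0,H) (W, H > 0) are in
   bijection with their restriction to [0,W) x [0,H); [per_ext s] is the
   periodic configuration with restriction s. *)
Definition per_ext (W H : nat) (s : {ffun 'I_W * 'I_H -> bool}) : config :=
  fun z => [exists p : 'I_W * 'I_H,
    [&& s p, (nat_of_ord p.1)%:Z == (z.1 %% W%:Z)%Z
           & (nat_of_ord p.2)%:Z == (z.2 %% H%:Z)%Z]].

Definition in_Omega_per (W H : nat) (s : {ffun 'I_W * 'I_H -> bool}) : bool :=
  `[< in_Omega (per_ext s) >].

Definition mu_per {R : realType} (W H : nat) (lam : R) (g : config -> R) : R :=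
  (\sum_(s : {ffun 'I_W * 'I_H -> bool} | in_Omega_per s)
      weight W H lam (per_ext s) * g (per_ext s))
  / (\sum_(s : {ffun 'I_W * 'I_H -> bool} | in_Omega_per s)
      weight W H lam (per_ext s)).

Definition R_local {R : realType} (K L : nat) (x0 y0 : int) (f : config -> R) : Prop :=
  forall sigma sigma' : config, in_Omega sigma -> in_Omega sigma' ->
    (forall z : int * int, x0 <= z.1 <= x0 + K%:Z -> y0 <= z.2 <= y0 + L%:Z ->
        sigma z = sigma' z) ->
    f sigma = f sigma'.

Definition refl_vert (c : int) (z : int * int) : int * int := (2 * c - z.1, z.2).
Definition refl_horiz (c : int) (z : int * int) : int * int := (z.1, 2 * c - z.2).

Definition refl_fun {R : realType} (tau : int * int -> int * int) (f : config -> R)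
  : config -> R := fun sigma => f (fun z => sigma (tau z)).

From HB Require Import structures.
From mathcomp Require Import all_boot all_order all_algebra.
From mathcomp Require Import boolp reals exp.
From mathcomp Require Import zify ring.
Import Order.TTheory GRing.Theory Num.Theory.
Local Open Scope ring_scope.

(* Case (a): the torus is Lambda = R_{2K x L}, cut by the two vertical lines
   x = x0 and x = x0 + K (mod 2K) into a "left" strip [x0, x0 + K] and a
   "right" strip, which the reflection tau through x = x0 + K maps onto it.
   A periodic configuration sigma is determined by its left part and by the
   left part of sigma o tau, and two such halves glue back to a configuration
   exactly when each is supported on the left strip and they agree on the two
   boundary columns.  Hard-core exclusion only involves columns at distance
   at most one, so sigma is admissible iff both halves are; vacant faces lie
   in one strip or the other, so the weight factorizes; and f, f o tau depend
   only on the respective halves.  Hence mu(f . tau f) is, up to the positive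
   partition function, a sum  sum_s a(left s) a(right s)  over such a
   splitting, which equals a sum of squares over boundary traces
   (lemma [reflection_positive]).  Case (b) follows from case (a) by
   exchanging the two coordinates. *)

(* An abstract splitting of a finite set S into pairs of "halves" in P whose
   fibres are parametrized by a boundary trace in B: a sum of a(left s) *
   a(right s) over S is a sum of squares, hence nonnegative. *)
Section ReflectionPositivity.
Variables (R : realDomainType) (S P B : finType).
Variables (left right : S -> P) (glue : P -> P -> S).
Variables (admissible : pred P) (trace : P -> B).
Hypothesis glue_split : forall s, glue (left s) (right s) = s.
Hypothesis split_glue : forall p q,
  (left (glue p q) == p) && (right (glue p q) == q) =
  [&& admissible p, admissible q & trace p == trace q].

Lemma sum_over_splittings (F : P -> P -> R) :
  \sum_s F (left s) (right s) =
  \sum_(pq | [&& admissible pq.1, admissible pq.2 & trace pq.1 == trace pq.2])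
     F pq.1 pq.2.
Proof.
rewrite (reindex_onto (fun s => (left s, right s)) (fun pq => glue pq.1 pq.2)) /=.
  by apply: eq_bigl => s; rewrite -split_glue glue_split !eqxx.
by case=> p q /=; rewrite -split_glue => /andP [/eqP -> /eqP ->].
Qed.

(* The sum equals \sum_b (\sum_(p admissible with trace b) a p)^2. *)
Lemma reflection_positive (a : P -> R) : 0 <= \sum_s a (left s) * a (right s).
Proof.
rewrite (sum_over_splittings (fun p q => a p * a q)) -(pair_big_dep admissible
  (fun p q => admissible q && (trace p == trace q)) (fun p q => a p * a q)) /=.
rewrite (partition_big trace xpredT) //=; apply: sumr_ge0 => b _.
rewrite (eq_bigr (fun p => a p * \sum_(q | admissible q && (trace q == b)) a q)).
  by rewrite -mulr_suml -expr2 sqr_ge0.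
move=> p /andP [_ /eqP <-]; rewrite mulr_sumr.
by apply: eq_bigl => q; rewrite eq_sym.
Qed.

End ReflectionPositivity.

Lemma modz_unique (d a r k : int) : 0 <= r < d -> a = k * d + r -> (a %% d)%Z = r.
Proof. by move=> hr ->; rewrite modzMDl modz_small. Qed.

Lemma modz_range (W : nat) (a : int) : (0 < W)%N -> 0 <= (a %% W%:Z)%Z < W%:Z.
Proof. by move=> W0; rewrite modz_ge0 ?ltz_pmod //; lia. Qed.

Definition periodic (W H : nat) (sig : config) : Prop :=
  forall a b, sig (a, b) = sig ((a %% W%:Z)%Z, (b %% H%:Z)%Z).

Lemma periodic_eq {W H sig} : periodic W H sig -> forall a b a' b',
  (a %% W%:Z)%Z = (a' %% W%:Z)%Z -> (b %% H%:Z)%Z = (b' %% H%:Z)%Z ->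
  sig (a, b) = sig (a', b').
Proof. by move=> P a b a' b' e1 e2; rewrite P e1 e2 -P. Qed.

Lemma per_ext_periodic {W H} s : periodic W H (@per_ext W H s).
Proof. by move=> a b; rewrite /per_ext /= !modz_mod. Qed.

Definition restriction (W H : nat) (sig : config) : {ffun 'I_W * 'I_H -> bool} :=
  [ffun p => sig ((nat_of_ord p.1)%:Z, (nat_of_ord p.2)%:Z)].

Lemma restriction_per_ext {W H} s : restriction W H (per_ext s) = s.
Proof.
apply/ffunP => -[i j]; rewrite ffunE /per_ext /=.
rewrite !modz_small; try by have := ltn_ord i; have := ltn_ord j; lia.
apply/existsP/idP => [[[i' j'] /and3P [s_ij /eqP ei /eqP ej]] | s_ij].
  move: ei ej => /= ei ej.
  by have [-> ->] : i = i' /\ j = j' by split; apply: val_inj => /=; lia.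
by exists (i, j); rewrite s_ij !eqxx.
Qed.

Lemma per_ext_restriction W H sig z : (0 < W)%N -> (0 < H)%N -> periodic W H sig ->
  per_ext (restriction W H sig) z = sig z.
Proof.
move=> W0 H0 P; case: z => a b.
have ha := modz_range W a W0; have hb := modz_range H b H0.
have hi : (`|(a %% W%:Z)%Z| < W)%N by lia.
have hj : (`|(b %% H%:Z)%Z| < H)%N by lia.
rewrite /per_ext P; apply/existsP/idP.
  by case=> q /and3P []; rewrite ffunE /= => + /eqP <- /eqP <-.
move=> sab; exists (Ordinal hi, Ordinal hj); rewrite ffunE /=.
have -> : (`|(a %% W%:Z)%Z|%N)%:Z = (a %% W%:Z)%Z by lia.
have -> : (`|(b %% H%:Z)%Z|%N)%:Z = (b %% H%:Z)%Z by lia.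
by rewrite sab !eqxx.
Qed.

Lemma per_ext_inj W H (p q : {ffun 'I_W * 'I_H -> bool}) :
  (forall z, per_ext p z = per_ext q z) -> p = q.
Proof.
move=> e; rewrite -(restriction_per_ext p) -(restriction_per_ext q).
by apply/ffunP => x; rewrite !ffunE e.
Qed.

Lemma restriction_ext W H sig sig' :
  (forall z, sig z = sig' z) -> restriction W H sig = restriction W H sig'.
Proof. by move=> e; apply/ffunP => x; rewrite !ffunE e. Qed.

Lemma in_Omega_sub {sig sig' : config} :
  in_Omega sig -> (forall z, sig' z -> sig z) -> in_Omega sig'.
Proof. by move=> O h u v hu hv; apply: O; apply: h. Qed.

Lemma in_Omega_ext {sig sig' : config} :
  in_Omega sig -> (forall z, sig z = sig' z) -> in_Omega sig'.
Proof. by move=> O h; apply: (in_Omega_sub O) => z; rewrite h. Qed.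

(* A face is vacant iff none of the four tiles centred at its corners is
   present: a boolean form of [vacant]. *)
Definition vacant_face (sig : config) (z : int * int) : bool :=
  ~~ [|| sig z, sig (z.1 + 1, z.2), sig (z.1, z.2 + 1) | sig (z.1 + 1, z.2 + 1)].

Lemma vacantE sig z : vacant sig z <-> vacant_face sig z.
Proof.
case: z => a b; rewrite /vacant /vacant_face /face_in_tile /=; split.
  move=> h; apply/negP => /or4P H; apply: h.
  by case: H => H; [exists (a, b) | exists (a + 1, b) | exists (a, b + 1)
    | exists (a + 1, b + 1)]; split => //=; apply/and4P; split; lia.
move=> /norP [h1 /norP [h2 /norP [h3 h4]]] [[u1 u2] [+ /and4P /= [e1 e2 e3 e4]]].
have [->|->] : u1 = a \/ u1 = a + 1 by lia.
all: have [->|->] : u2 = b \/ u2 = b + 1 by lia.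
all: exact/negP.
Qed.

Lemma n_vacantE W H sig : n_vacant W H sig =
  (\sum_(i < W) \sum_(j < H) vacant_face sig ((nat_of_ord i)%:Z, (nat_of_ord j)%:Z))%N.
Proof.
rewrite /n_vacant -sum1_card pair_big /= big_mkcond /=.
apply: eq_bigr => -[i j] _; rewrite !inE /=.
by case: asboolP => /vacantE h; [rewrite h | case: (vacant_face _ _) h].
Qed.

Lemma vacant_face_ext {sig sig' : config} z :
  (forall z, sig z = sig' z) -> vacant_face sig z = vacant_face sig' z.
Proof. by move=> e; rewrite /vacant_face !e. Qed.

Lemma vacant_face_periodic {W H sig} : periodic W H sig -> forall a b,
  vacant_face sig (a, b) = vacant_face sig ((a %% W%:Z)%Z, b).
Proof.
move=> P a b; rewrite /vacant_face /=.
have e : (((a %% W%:Z)%Z + 1) %% W%:Z)%Z = ((a + 1) %% W%:Z)%Z by rewrite modzDml.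
set a' := (a %% W%:Z)%Z.
rewrite (periodic_eq P a b a' b) ?modz_mod //.
rewrite (periodic_eq P (a + 1) b (a' + 1) b) ?e //.
rewrite (periodic_eq P a (b + 1) a' (b + 1)) ?modz_mod //.
by rewrite (periodic_eq P (a + 1) (b + 1) (a' + 1) (b + 1)) ?e.
Qed.

Lemma sum_period_shift W (x0 : int) (G : int -> nat) :
  (forall a, G a = G ((a %% W%:Z)%Z)) ->
  (\sum_(i < W) G (nat_of_ord i)%:Z = \sum_(t < W) G (x0 + (nat_of_ord t)%:Z)%R)%N.
Proof.
case: W G => [|W] G hG; first by rewrite !big_ord0.
have lt_mod x : (`|(x %% W.+1%:Z)%Z| < W.+1)%N by have := modz_range W.+1 x (ltn0Sn W); lia.
pose shift (t : 'I_W.+1) := Ordinal (lt_mod (x0 + (nat_of_ord t)%:Z)).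
have shiftE t : (nat_of_ord (shift t))%:Z = ((x0 + (nat_of_ord t)%:Z) %% W.+1%:Z)%Z.
  by have := modz_range W.+1 (x0 + (nat_of_ord t)%:Z) (ltn0Sn W); rewrite /=; lia.
have shift_inj : injective shift.
  move=> t t' /(congr1 (fun i : 'I_W.+1 => (((nat_of_ord i)%:Z - x0) %% W.+1%:Z)%Z)).
  rewrite !shiftE !modzDml !(addrC x0) !addrK !modz_small;
    [|by have := ltn_ord t'; lia|by have := ltn_ord t; lia].
  by move=> h; apply: val_inj => /=; lia.
rewrite (reindex_inj shift_inj) /=.
by apply: eq_bigr => t _; rewrite shiftE -hG.
Qed.

Section StripGeometry.
Variables (K : nat) (x0 : int).
Hypothesis K_gt0 : (0 < K)%N.

Definition offset (x : int) : int := ((x - x0) %% (K.*2)%:Z)%Z.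
Definition in_left (x : int) : bool := offset x <= K%:Z.
Definition on_boundary (x : int) : bool := (offset x == 0) || (offset x == K%:Z).

Local Notation mirror x := (2 * (x0 + K%:Z) - x).

Lemma offset_range x : 0 <= offset x < (K.*2)%:Z.
Proof. by apply: modz_range; lia. Qed.

Lemma offset_decomp x : x - x0 = ((x - x0) %/ (K.*2)%:Z)%Z * (K.*2)%:Z + offset x.
Proof. exact: divz_eq. Qed.

Lemma offset_succ x :
  offset (x + 1) = if offset x + 1 == (K.*2)%:Z then 0 else offset x + 1.
Proof.
have hq := offset_decomp x; have hb := offset_range x.
case: eqP => e; rewrite {1}/offset.
  apply: (@modz_unique _ _ _ (((x - x0) %/ (K.*2)%:Z)%Z + 1)); first by lia.
  by rewrite mulrDl mul1r; lia.
by apply: (@modz_unique _ _ _ ((x - x0) %/ (K.*2)%:Z)%Z); lia.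
Qed.

Lemma offset_mirror x :
  offset (mirror x) = if offset x == 0 then 0 else (K.*2)%:Z - offset x.
Proof.
have hq := offset_decomp x; have hb := offset_range x.
case: eqP => e; rewrite {1}/offset.
all: have -> : mirror x - x0 = (K.*2)%:Z - (x - x0) by lia.
  by apply: (@modz_unique _ _ _ (1 - ((x - x0) %/ (K.*2)%:Z)%Z)); rewrite ?mulrBl; lia.
by apply: (@modz_unique _ _ _ (- ((x - x0) %/ (K.*2)%:Z)%Z)); rewrite ?mulNr; lia.
Qed.

Lemma offset_mod x : offset ((x %% (K.*2)%:Z)%Z) = offset x.
Proof. by rewrite /offset modzDml. Qed.

Lemma in_left_mod x : in_left ((x %% (K.*2)%:Z)%Z) = in_left x.
Proof. by rewrite /in_left offset_mod. Qed.

Lemma on_boundary_mod x : on_boundary ((x %% (K.*2)%:Z)%Z) = on_boundary x.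
Proof. by rewrite /on_boundary offset_mod. Qed.

Lemma in_left_rect x : x0 <= x <= x0 + K%:Z -> in_left x.
Proof. by move=> h; rewrite /in_left /offset modz_small; lia. Qed.

Lemma in_left_mirror x : ~~ in_left x -> in_left (mirror x).
Proof. by rewrite /in_left offset_mirror; have := offset_range x; case: eqP; lia. Qed.

Lemma in_left_mirror_boundary x : in_left x && in_left (mirror x) = on_boundary x.
Proof.
by rewrite /in_left /on_boundary offset_mirror; have := offset_range x; case: eqP; lia.
Qed.

Lemma on_boundary_in_left x : on_boundary x -> in_left x.
Proof. by rewrite /on_boundary /in_left => /orP [] /eqP ->; lia. Qed.

Lemma mirror_boundary_mod x : on_boundary x ->
  (mirror x %% (K.*2)%:Z)%Z = (x %% (K.*2)%:Z)%Z.
Proof.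
move=> hB; have e : offset (mirror x) = offset x.
  by rewrite offset_mirror; move: hB; rewrite /on_boundary; case: eqP => //= _ /eqP ->; lia.
move: e; rewrite /offset; move: (mirror x) => y e.
by rewrite -[y](subrK x0) -[x](subrK x0) -modzDml e modzDml.
Qed.

(* Two columns at distance at most one lie both in the left strip or both in
   its mirror image: hard-core interactions never cross the cut. *)
Lemma adjacent_columns a b : `|a - b| < 2 ->
  (in_left a && in_left b) || (in_left (mirror a) && in_left (mirror b)).
Proof.
have succ y : (in_left y && in_left (y + 1)) ||
    (in_left (mirror y) && in_left (mirror (y + 1))).
  rewrite /in_left !offset_mirror offset_succ; have := offset_range y.
  by case: eqP => e1; case: eqP => e2; try case: eqP => e3; lia.
move=> hab; have [->|[->|->]] : b = a \/ b = a + 1 \/ a = b + 1 by lia.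
- by rewrite !andbb; case: (boolP (in_left a)) => //= /in_left_mirror.
- exact: succ.
- by rewrite andbC [X in _ || X]andbC.
Qed.

Lemma mirror_mod a :
  (mirror (a %% (K.*2)%:Z)%Z %% (K.*2)%:Z)%Z = (mirror a %% (K.*2)%:Z)%Z.
Proof. by rewrite -modzDmr modzNm modzDmr. Qed.

End StripGeometry.

Lemma refl_vertK c z : refl_vert c (refl_vert c z) = z.
Proof. by case: z => a b; rewrite /refl_vert /=; congr pair; ring. Qed.

Lemma tiles_int_disjoint_refl c u v :
  tiles_int_disjoint (refl_vert c u) (refl_vert c v) = tiles_int_disjoint u v.
Proof. by rewrite /tiles_int_disjoint /refl_vert /=; lia. Qed.

Lemma in_Omega_refl c sig : in_Omega sig -> in_Omega (fun z => sig (refl_vert c z)).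
Proof.
move=> O u v su sv neq; rewrite -(tiles_int_disjoint_refl c); apply: O => // e.
by apply: neq; rewrite -(refl_vertK c u) e refl_vertK.
Qed.

Definition left_part (K : nat) (x0 : int) (sig : config) : config :=
  fun z => sig z && in_left K x0 z.1.
Definition reflect_cfg (K : nat) (x0 : int) (sig : config) : config :=
  fun z => sig (refl_vert (x0 + K%:Z) z).
Definition glue_cfg (K : nat) (x0 : int) (s1 s2 : config) : config :=
  fun z => if in_left K x0 z.1 then s1 z else s2 (refl_vert (x0 + K%:Z) z).

Section HalfConfigurations.
Variables (K H : nat) (x0 : int).
Hypothesis K_gt0 : (0 < K)%N.
Local Notation tau := (refl_vert (x0 + K%:Z)).

Lemma periodic_and W (Q : int -> bool) sig : (forall a, Q ((a %% W%:Z)%Z) = Q a) ->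
  periodic W H sig -> periodic W H (fun z => sig z && Q z.1).
Proof. by move=> hQ P a b /=; rewrite hQ P. Qed.

Lemma periodic_left_part sig : periodic (K.*2) H sig -> periodic (K.*2) H (left_part K x0 sig).
Proof. by apply: periodic_and => a; rewrite in_left_mod. Qed.

Lemma periodic_reflect sig : periodic (K.*2) H sig -> periodic (K.*2) H (reflect_cfg K x0 sig).
Proof.
move=> P a b; rewrite /reflect_cfg /refl_vert /=.
by apply: (periodic_eq P); rewrite ?mirror_mod ?modz_mod.
Qed.

Lemma periodic_glue s1 s2 : periodic (K.*2) H s1 -> periodic (K.*2) H s2 ->
  periodic (K.*2) H (glue_cfg K x0 s1 s2).
Proof.
move=> P1 P2 a b; rewrite /glue_cfg /= in_left_mod; case: ifP => _; first exact: P1.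
exact: (@periodic_reflect s2 P2 a b).
Qed.

(* The hard-core constraint holds for sigma as soon as it holds for both of
   its halves, since overlapping tiles sit in adjacent columns. *)
Lemma in_Omega_halves sig : in_Omega (left_part K x0 sig) ->
  in_Omega (left_part K x0 (reflect_cfg K x0 sig)) -> in_Omega sig.
Proof.
move=> OL OR u v su sv neq; apply/negPn/negP => overlap.
have hab : `|u.1 - v.1| < 2 by move: overlap; rewrite /tiles_int_disjoint; lia.
case/orP: (adjacent_columns K x0 K_gt0 _ _ hab) => /andP [hu hv]; move/negP: overlap; apply.
  by apply: OL => //; rewrite /left_part ?su ?sv ?hu ?hv.
rewrite -(tiles_int_disjoint_refl (x0 + K%:Z)); apply: OR.
- by rewrite /left_part /reflect_cfg refl_vertK su.
- by rewrite /left_part /reflect_cfg refl_vertK sv.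
- by move=> e; apply: neq; rewrite -(refl_vertK (x0 + K%:Z) u) e refl_vertK.
Qed.

Definition left_vacancies (sig : config) : nat :=
  (\sum_(t < K.*2 | (t < K)%N) \sum_(j < H)
     vacant_face sig ((x0 + (nat_of_ord t)%:Z)%R, (nat_of_ord j)%:Z))%N.

Lemma left_vacancies_ext (sig sig' : config) :
  (forall z, sig z = sig' z) -> left_vacancies sig = left_vacancies sig'.
Proof.
by move=> e; apply: eq_bigr => t _; apply: eq_bigr => j _; by rewrite (vacant_face_ext _ e).
Qed.

(* Faces of the left strip only see the closed left strip. *)
Lemma left_vacancies_left_part sig : left_vacancies (left_part K x0 sig) = left_vacancies sig.
Proof.
apply: eq_bigr => t tK; apply: eq_bigr => j _.
by rewrite /vacant_face /left_part /= !in_left_rect ?andbT //; lia.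
Qed.

Lemma vacant_face_reflect sig a b :
  vacant_face sig (a, b) = vacant_face (reflect_cfg K x0 sig) (2 * (x0 + K%:Z) - a - 1, b).
Proof.
rewrite /vacant_face /reflect_cfg /refl_vert /=.
have -> : 2 * (x0 + K%:Z) - (2 * (x0 + K%:Z) - a - 1) = a + 1 by ring.
have -> : 2 * (x0 + K%:Z) - (2 * (x0 + K%:Z) - a - 1 + 1) = a by ring.
by case: (sig (a, b)); case: (sig (a + 1, b)); case: (sig (a, b + 1));
  case: (sig (a + 1, b + 1)).
Qed.

(* Every face of the torus lies in the left strip or in its mirror image. *)
Lemma n_vacant_split sig : periodic (K.*2) H sig ->
  n_vacant (K.*2) H sig = (left_vacancies sig + left_vacancies (reflect_cfg K x0 sig))%N.
Proof.
move=> P; rewrite n_vacantE.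
rewrite (@sum_period_shift (K.*2) x0
  (fun a => \sum_(j < H) vacant_face sig (a, (nat_of_ord j)%:Z))%N); last first.
  by move=> a; apply: eq_bigr => j _; rewrite (vacant_face_periodic P).
rewrite (bigID (fun t : 'I_(K.*2) => (t < K)%N)) /=; congr addn.
rewrite (reindex_inj rev_ord_inj) /=; apply: eq_big => [t | t tK].
  by rewrite /= subnSK //; lia.
apply: eq_bigr => j _; rewrite vacant_face_reflect; congr (vacant_face _ (_, _)).
by have := ltn_ord t; rewrite /=; lia.
Qed.

End HalfConfigurations.

Section Patterns.
Variables (K H : nat) (x0 : int).
Hypotheses (K_gt0 : (0 < K)%N) (H_gt0 : (0 < H)%N).
Local Notation pattern := {ffun 'I_(K.*2) * 'I_H -> bool}.
Local Notation tau := (refl_vert (x0 + K%:Z)).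

Let K2_gt0 : (0 < K.*2)%N. Proof. by rewrite double_gt0. Qed.

Definition left_pattern (s : pattern) : pattern :=
  restriction (K.*2) H (left_part K x0 (per_ext s)).
Definition right_pattern (s : pattern) : pattern :=
  restriction (K.*2) H (left_part K x0 (reflect_cfg K x0 (per_ext s))).
Definition glue_patterns (p q : pattern) : pattern :=
  restriction (K.*2) H (glue_cfg K x0 (per_ext p) (per_ext q)).
Definition boundary_trace (p : pattern) : pattern :=
  restriction (K.*2) H (fun z => per_ext p z && on_boundary K x0 z.1).

Lemma left_patternE s z : per_ext (left_pattern s) z = left_part K x0 (per_ext s) z.
Proof. by rewrite per_ext_restriction //; apply/periodic_left_part/per_ext_periodic. Qed.

Lemma right_patternE s z :
  per_ext (right_pattern s) z = left_part K x0 (reflect_cfg K x0 (per_ext s)) z.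
Proof.
by rewrite per_ext_restriction //; apply/periodic_left_part/periodic_reflect/per_ext_periodic.
Qed.

Lemma glue_patternsE p q z :
  per_ext (glue_patterns p q) z = glue_cfg K x0 (per_ext p) (per_ext q) z.
Proof. by rewrite per_ext_restriction //; apply: periodic_glue; apply: per_ext_periodic. Qed.

Lemma boundary_traceE p z : per_ext (boundary_trace p) z = per_ext p z && on_boundary K x0 z.1.
Proof.
rewrite per_ext_restriction //; apply: periodic_and; last exact: per_ext_periodic.
by move=> a; rewrite on_boundary_mod.
Qed.

Lemma per_ext_mirror_boundary (p : pattern) z : on_boundary K x0 z.1 ->
  per_ext p (tau z) = per_ext p z.
Proof.
case: z => a b /= hB; apply: (periodic_eq (per_ext_periodic p)) => //.
exact: mirror_boundary_mod.
Qed.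

Lemma glue_split s : glue_patterns (left_pattern s) (right_pattern s) = s.
Proof.
apply: per_ext_inj => z; rewrite glue_patternsE /glue_cfg.
case: ifP => hz; first by rewrite left_patternE /left_part hz andbT.
rewrite right_patternE /left_part /reflect_cfg refl_vertK.
by rewrite in_left_mirror ?hz ?andbT.
Qed.

Lemma left_pattern_glue p q : left_pattern (glue_patterns p q) = left_pattern p.
Proof.
apply: per_ext_inj => z; rewrite !left_patternE /left_part glue_patternsE /glue_cfg.
by case: ifP; rewrite ?andbF ?andbT.
Qed.

Lemma right_pattern_glueE p q z : per_ext (right_pattern (glue_patterns p q)) z =
  if on_boundary K x0 z.1 then per_ext p z else per_ext q z && in_left K x0 z.1.
Proof.
rewrite right_patternE /left_part /reflect_cfg glue_patternsE /glue_cfg refl_vertK /=.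
rewrite -(in_left_mirror_boundary K x0 K_gt0).
case: (boolP (in_left K x0 z.1)) => hz; rewrite ?andbF ?andbT //=.
case: ifP => // hm.
by rewrite per_ext_mirror_boundary //= -(in_left_mirror_boundary K x0 K_gt0) hz.
Qed.

Lemma split_glue p q :
  (left_pattern (glue_patterns p q) == p) && (right_pattern (glue_patterns p q) == q) =
  [&& left_pattern p == p, left_pattern q == q & boundary_trace p == boundary_trace q].
Proof.
rewrite left_pattern_glue; congr andb; apply/eqP/andP => [e | [/eqP lq /eqP bpq]].
  split; apply/eqP.
    apply: per_ext_inj => z; rewrite left_patternE /left_part -e right_pattern_glueE.
    by case: (boolP (on_boundary _ _ _)) => [/(on_boundary_in_left K x0 K_gt0) -> | _];
      rewrite ?andbT // -andbA andbb.
  apply: restriction_ext => z; rewrite -e right_pattern_glueE.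
  by case: (boolP (on_boundary _ _ _)); rewrite ?andbT ?andbF.
apply: per_ext_inj => z; rewrite right_pattern_glueE.
case: ifP => hB.
  by have := congr1 (fun r => per_ext r z) bpq; rewrite /= !boundary_traceE hB !andbT.
by rewrite -[in RHS]lq left_patternE.
Qed.

Section Factorization.
Variables (R : realType) (lam : R) (y0 : int) (f : config -> R).
Hypotheses (lam_gt0 : 0 < lam) (f_local : R_local K H x0 y0 f).

Definition half_weight (sig : config) : R :=
  lam `^ (- (4%:R)^-1 * (left_vacancies K H x0 sig)%:R).

Definition half_term (p : pattern) : R :=
  (if in_Omega_per p then half_weight (per_ext p) else 0) * f (per_ext p).

Lemma in_Omega_split s : in_Omega (per_ext s) <->
  in_Omega (per_ext (left_pattern s)) /\ in_Omega (per_ext (right_pattern s)).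
Proof.
split=> [O | [OL OR]].
  split; [apply: (in_Omega_sub O) | apply: (in_Omega_sub (in_Omega_refl (x0 + K%:Z) _ O))].
    by move=> z; rewrite left_patternE => /andP [].
  by move=> z; rewrite right_patternE => /andP [].
apply: (in_Omega_halves K x0 K_gt0).
  by apply: (in_Omega_ext OL) => z; rewrite left_patternE.
by apply: (in_Omega_ext OR) => z; rewrite right_patternE.
Qed.

Lemma weight_split s : weight (K.*2) H lam (per_ext s) =
  half_weight (per_ext (left_pattern s)) * half_weight (per_ext (right_pattern s)).
Proof.
have left_vac : left_vacancies K H x0 (per_ext (left_pattern s)) =
                left_vacancies K H x0 (per_ext s).
  rewrite -[RHS](left_vacancies_left_part K H x0 K_gt0).
  by apply: left_vacancies_ext => z; rewrite left_patternE.
have right_vac : left_vacancies K H x0 (per_ext (right_pattern s)) =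
                 left_vacancies K H x0 (reflect_cfg K x0 (per_ext s)).
  rewrite -[RHS](left_vacancies_left_part K H x0 K_gt0).
  by apply: left_vacancies_ext => z; rewrite right_patternE.
rewrite /weight /half_weight left_vac right_vac.
rewrite (n_vacant_split K H x0 K_gt0 _ (per_ext_periodic s)) natrD mulrDr powRD //.
by rewrite (gt_eqF lam_gt0) implybT.
Qed.

Lemma locality_split s : in_Omega (per_ext s) ->
  f (per_ext s) = f (per_ext (left_pattern s)) /\
  refl_fun tau f (per_ext s) = f (per_ext (right_pattern s)).
Proof.
move=> O; have [OL OR] := (in_Omega_split s).1 O; split.
  apply: f_local => // z h1 _.
  by rewrite left_patternE /left_part in_left_rect ?andbT.
apply: f_local => //; first exact: in_Omega_refl.
move=> z h1 _; rewrite right_patternE /left_part /reflect_cfg.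
by rewrite in_left_rect ?andbT.
Qed.

Lemma summand_split s :
  (if in_Omega_per s then
     weight (K.*2) H lam (per_ext s) * (f (per_ext s) * refl_fun tau f (per_ext s))
   else 0) = half_term (left_pattern s) * half_term (right_pattern s).
Proof.
rewrite /half_term /in_Omega_per.
have [O | nO] := asboolP (in_Omega (per_ext s)).
  have [OL OR] := (in_Omega_split s).1 O; have [fL fR] := locality_split s O.
  by rewrite (asboolT OL) (asboolT OR) weight_split fL fR mulrACA.
case: asboolP => OL; case: asboolP => OR; rewrite ?mul0r ?mulr0 //.
by case: nO; apply/in_Omega_split.
Qed.

Lemma reflection_positivity_vertical :
  0 <= mu_per (K.*2) H lam (fun sigma => f sigma * refl_fun tau f sigma).
Proof.
rewrite /mu_per; apply: divr_ge0; last by apply: sumr_ge0 => s _; exact: powR_ge0.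
rewrite big_mkcond /= (eq_bigr _ (fun s _ => summand_split s)).
apply: (@reflection_positive R _ _ _ left_pattern right_pattern glue_patterns
  (fun p => left_pattern p == p) boundary_trace); [exact: glue_split | exact: split_glue].
Qed.

End Factorization.
End Patterns.

Definition transpose_cfg (sig : config) : config := fun z => sig (z.2, z.1).

Definition transpose_pattern W H (t : {ffun 'I_H * 'I_W -> bool}) :
  {ffun 'I_W * 'I_H -> bool} :=
  [ffun p => t (p.2, p.1)].

Lemma transpose_patternK W H : cancel (transpose_pattern W H) (transpose_pattern H W).
Proof. by move=> t; apply/ffunP => -[i j]; rewrite !ffunE. Qed.

Lemma transpose_cfgK : involutive transpose_cfg.
Proof. by move=> sig; apply: funext => -[a b]. Qed.

Lemma per_ext_transpose W H (t : {ffun 'I_H * 'I_W -> bool}) : (0 < W)%N -> (0 < H)%N ->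
  per_ext (transpose_pattern W H t) = transpose_cfg (per_ext t).
Proof.
move=> W0 H0; have periodicT : periodic W H (transpose_cfg (per_ext t)).
  by move=> a b; rewrite /transpose_cfg /= per_ext_periodic.
apply: funext => z; rewrite -(per_ext_restriction _ _ _ z W0 H0 periodicT); congr per_ext.
apply/ffunP => -[i j]; rewrite !ffunE /transpose_cfg /=.
by rewrite -[in LHS](restriction_per_ext t) ffunE.
Qed.

Lemma in_Omega_transpose sig : in_Omega sig -> in_Omega (transpose_cfg sig).
Proof.
move=> O [a b] [c d] su sv neq.
have : tiles_int_disjoint (b, a) (d, c) by apply: O => // -[eb ea]; apply: neq; rewrite eb ea.
by rewrite /tiles_int_disjoint /= orbC.
Qed.

Lemma n_vacant_transpose W H sig : n_vacant W H (transpose_cfg sig) = n_vacant H W sig.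
Proof.
rewrite !n_vacantE exchange_big /=; apply: eq_bigr => j _; apply: eq_bigr => i _.
rewrite /vacant_face /transpose_cfg /=.
by case: (sig (_, _)); case: (sig (_, _)); case: (sig (_, _)); case: (sig (_, _)).
Qed.

Lemma mu_per_transpose (R : realType) W H (lam : R) (g : config -> R) :
  (0 < W)%N -> (0 < H)%N ->
  mu_per W H lam g = mu_per H W lam (fun sig => g (transpose_cfg sig)).
Proof.
move=> W0 H0; rewrite /mu_per.
have bij : {on [pred s | in_Omega_per s], bijective (transpose_pattern W H)}.
  by exists (transpose_pattern H W) => t _; rewrite transpose_patternK.
rewrite (reindex _ bij) [X in _ / X](reindex _ bij).
have OmegaT t : in_Omega_per (transpose_pattern W H t) = in_Omega_per t.
  rewrite /in_Omega_per per_ext_transpose //; apply/asboolP/asboolP.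
    by move/in_Omega_transpose; rewrite transpose_cfgK.
  exact: in_Omega_transpose.
under eq_bigl do rewrite OmegaT.
under [X in _ / X]eq_bigl do rewrite OmegaT.
by congr (_ / _); apply: eq_bigr => t _;
  rewrite /weight per_ext_transpose // n_vacant_transpose.
Qed.

Lemma R_local_transpose {R : realType} {K L x0 y0} {f : config -> R} :
  R_local K L x0 y0 f -> R_local L K y0 x0 (fun sig => f (transpose_cfg sig)).
Proof.
move=> f_local s1 s2 O1 O2 agree; apply: f_local; try exact: in_Omega_transpose.
by move=> z h1 h2; apply: agree.
Qed.

Theorem lemma3p1 (R : realType) (K L : nat) (x0 y0 : int) (lam : R)
    (f : config -> R) :
  (0 < K)%N -> (0 < L)%N -> 0 < lam ->
  R_local K L x0 y0 f ->
  0 <= mu_per (K.*2) L lam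
         (fun sigma => f sigma * refl_fun (refl_vert (x0 + K%:Z)) f sigma)
  /\
  0 <= mu_per K (L.*2) lam
         (fun sigma => f sigma * refl_fun (refl_horiz (y0 + L%:Z)) f sigma).
Proof.
move=> K_gt0 L_gt0 lam_gt0 f_local; split.
  exact: (reflection_positivity_vertical K L x0 K_gt0 L_gt0 R lam y0 f lam_gt0 f_local).
rewrite mu_per_transpose ?double_gt0 //.
exact: (reflection_positivity_vertical L K y0 L_gt0 K_gt0 R lam x0 _ lam_gt0
  (R_local_transpose f_local)).
Qed.
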